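(* Suppose there is a norm $\|\cdot\|$ on $\mathbb R^n$ and $L>0$ such that $f$ is $2$-uniformly smooth on $\mathrm{dom}(\Psi)$ with constant $L$. (a) If moreover $\Psi$ is $2$-uniformly convex on $\mathrm{dom}(\Psi)$ with constant $\mu>0$, then $(\mathcal D,\mathrm{gap})$ satisfies the $(2,1)$-growth property with $M=2L/\mu$. (b) If $\Psi=\delta_C$ is the indicator function of a closed convex set $C\subseteq\mathbb R^n$ which is $2$-uniformly convex with constant $\mu>0$, and $\ell:=\inf_{x\in C}\|\nabla f(x)\|^*>0$, then $(\mathcal D,\mathrm{gap})$ satisfies the $(2,1)$-growth property with $M=2L/(\ell\mu)$. Here the $(2,1)$-growth property with constant $M$ means: for all $x\in\mathrm{dom}(\Psi)$, $g=\nabla f(x)$, $s\in\partial\Psi^*(-g)$, $\mathcal D(x,s,\theta)\le\frac{M\theta^2}{2}\mathrm{gap}(x,g)$ for all $\theta\in[0,1]$.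
   Context: Let $f,\Psi:\mathbb{R}^n\to\mathbb{R}\cup\{\infty\}$ be closed proper convex functions such that (A1) $f$ is differentiable on $\mathrm{dom}(\Psi)$, and (A2) for every $x\in\mathrm{dom}(f)$ the set $\arg\min_s\{\langle\nabla f(x),s\rangle+\Psi(s)\}$ is nonempty. $f^*,\Psi^*$ denote convex conjugates; $\arg\min_y\{\langle g,y\rangle+\Psi(y)\}=\partial\Psi^*(-g)$. $D_f(y,x)=f(y)-f(x)-\langle\nabla f(x),y-x\rangle$. $\mathrm{gap}(x,u)=f(x)+\Psi(x)+f^*(u)+\Psi^*(-u)$. $\mathcal{D}(x,s,\theta)=D_f(x+\theta(s-x),x)+\Psi(x+\theta(s-x))-(1-\theta)\Psi(x)-\theta\Psi(s)$. $\|\cdot\|^*$ is the dual norm. $f$ is $q$-uniformly smooth on $C$ with constant $L$ if for all $x,y\in C$, $\theta\in[0,1]$: $f(x+\theta(y-x))\ge(1-\theta)f(x)+\theta f(y)-\frac Lq\theta(1-\theta)\|y-x\|^q$. $\Psi$ is $p$-uniformly convex on $C$ with constant $\mu$ ($p\ge2$) if for all $x,y\in C$, $\theta\in[0,1]$: $\Psi(x+\theta(y-x))\le(1-\theta)\Psi(x)+\theta\Psi(y)-\frac\mu p\theta(1-\theta)\|y-x\|^p$. A closed convex set $C$ is $p$-uniformly convex with constant $\mu$ ($p\ge2$) if for all $x,y\in C$, $\theta\in[0,1]$ and $\|z\|\le1$: $x+\theta(y-x)+\frac\mu p\theta(1-\theta)\|y-x\|^pz\in C$. *)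

From HB Require Import structures.
From mathcomp Require Import all_boot all_order all_algebra.
From mathcomp Require Import all_classical all_reals.
From mathcomp Require Import ereal topology normedtype sequences.
Set Implicit Arguments. Unset Strict Implicit. Unset Printing Implicit Defensive.
Import Order.TTheory GRing.Theory Num.Theory numFieldNormedType.Exports.
Local Open Scope classical_set_scope.
Local Open Scope ring_scope.

Section Defs.
Variables (R : realType) (n : nat).
Notation V := 'rV[R]_n.

Definition dot (u v : V) : R := \sum_(i < n) u 0 i * v 0 i.

(* sup-norm, used only to express differentiability / limits *)
Definition ninf (h : V) : R := \big[Num.max/0]_(i < n) `|h 0 i|.

Definition is_norm (N : V -> R) : Prop :=
  [/\ forall x, 0 <= N x,
      forall x, N x = 0 -> x = 0,
      forall (a : R) x, N (a *: x) = `|a| * N x &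
      forall x y, N (x + y) <= N x + N y].

Definition dualnorm (N : V -> R) (g : V) : R :=
  sup [set dot g x | x in [set x | N x <= 1]].

Definition vcvg (u : nat -> V) (x : V) : Prop :=
  forall i : 'I_n, (fun k => u k 0 i) @ \oo --> x 0 i.

Definition closed_set (C : set V) : Prop :=
  forall (u : nat -> V) x, (forall k, C (u k)) -> vcvg u x -> C x.

Definition convex_set (C : set V) : Prop :=
  forall (x y : V) (t : R), C x -> C y -> 0 <= t <= 1 -> C (x + t *: (y - x)).

Definition dom (F : V -> \bar R) : set V := [set x | (F x < +oo)%E].

Definition proper_fun (F : V -> \bar R) : Prop :=
  (forall x, F x != -oo%E) /\ exists x, (F x < +oo)%E.

Definition convex_fun (F : V -> \bar R) : Prop :=
  forall (x y : V) (t : R), 0 < t < 1 ->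
    (F (x + t *: (y - x))%R <= (1 - t)%:E * F x + t%:E * F y)%E.

(* closed function: the epigraph {(x,t) | F x <= t} is closed *)
Definition closed_fun (F : V -> \bar R) : Prop :=
  forall (u : nat -> V) (a : nat -> R) x (t : R),
    (forall k, (F (u k) <= (a k)%:E)%E) -> vcvg u x -> a @ \oo --> t ->
    (F x <= t%:E)%E.

Definition has_gradient (F : V -> \bar R) (g : V) (x : V) : Prop :=
  F x \is a fin_num /\
  forall eps : R, 0 < eps -> exists2 d : R, 0 < d &
    forall h : V, ninf h < d ->
      F (x + h)%R \is a fin_num /\
      `|fine (F (x + h)%R) - fine (F x) - dot g h| <= eps * ninf h.

Definition conjf (F : V -> \bar R) (u : V) : \bar R :=
  ereal_sup [set ((dot u x)%:E - F x)%E | x in setT].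

Definition subdiff (F : V -> \bar R) (u : V) (s : V) : Prop :=
  F u \is a fin_num /\ forall v, (F u + (dot s (v - u)%R)%:E <= F v)%E.

Definition indicator (C : set V) : V -> \bar R :=
  fun x => if x \in C then 0%E else +oo%E.

Definition bregman (f : V -> \bar R) (gf : V -> V) (y x : V) : \bar R :=
  (f y - f x - (dot (gf x) (y - x)%R)%:E)%E.

Definition gap (f Psi : V -> \bar R) (x u : V) : \bar R :=
  (f x + Psi x + conjf f u + conjf Psi (- u)%R)%E.

Definition Dcal (f Psi : V -> \bar R) (gf : V -> V) (x s : V) (t : R) : \bar R :=
  let y := x + t *: (s - x) in
  (bregman f gf y x + Psi y - (1 - t)%:E * Psi x - t%:E * Psi s)%E.

Definition unif_smooth (N : V -> R) (q : nat) (C : set V) (f : V -> \bar R) (L : R) : Prop :=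
  forall (x y : V) (t : R), C x -> C y -> 0 <= t <= 1 ->
    ((1 - t)%:E * f x + t%:E * f y - (L / q%:R * t * (1 - t) * N (y - x) ^+ q)%:E
       <= f (x + t *: (y - x))%R)%E.

Definition unif_convex_fun (N : V -> R) (p : nat) (C : set V) (Psi : V -> \bar R) (mu : R) : Prop :=
  forall (x y : V) (t : R), C x -> C y -> 0 <= t <= 1 ->
    (Psi (x + t *: (y - x))%R
       <= (1 - t)%:E * Psi x + t%:E * Psi y - (mu / p%:R * t * (1 - t) * N (y - x) ^+ p)%:E)%E.

Definition unif_convex_set (N : V -> R) (p : nat) (C : set V) (mu : R) : Prop :=
  forall (x y : V) (t : R) (z : V), C x -> C y -> 0 <= t <= 1 -> N z <= 1 ->
    C (x + t *: (y - x) + (mu / p%:R * t * (1 - t) * N (y - x) ^+ p) *: z).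

Definition growth21 (f Psi : V -> \bar R) (gf : V -> V) (M : R) : Prop :=
  forall x, dom Psi x -> forall s, subdiff (conjf Psi) (- gf x)%R s ->
    forall t : R, 0 <= t <= 1 ->
      (Dcal f Psi gf x s t <= (M * t ^+ 2 / 2)%:E * gap f Psi x (gf x))%E.

End Defs.

From HB Require Import structures.
From mathcomp Require Import all_boot all_order all_algebra.
From mathcomp Require Import all_classical all_reals.
From mathcomp Require Import ereal topology normedtype sequences derive.
From mathcomp Require Import ring lra.
Import Order.TTheory GRing.Theory Num.Theory numFieldNormedType.Exports.
Local Open Scope classical_set_scope.
Local Open Scope ring_scope.

Set Implicit Arguments. Unset Strict Implicit.

(* Fix x in dom Psi, g = grad f(x) and a minimiser s0 of the linearised
   objective <g,.> + Psi, whose minimum is -Psi^*(-g).  Both uniform convexity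
   assumptions make it grow quadratically away from s0,
     <g,z> + Psi z - (<g,s0> + Psi s0) >= c/2 ||s0 - z||^2,
   with c = mu in (a) and c = ell mu in (b): in (b) the point z + theta (s0 - z)
   may be pushed by a multiple of a vector w with <g,w> close to ||g||^* >= ell.
   Quadratic growth makes s0 the only subgradient of Psi^* at -g, and since
   f^*(g) = <g,x> - f x the gap is the growth at z = x, so
   gap(x,g) >= c/2 ||s0 - x||^2.  Smoothness of f and convexity of Psi give
   D(x,s0,theta) <= L/2 theta^2 ||s0 - x||^2 <= (2L/c) theta^2/2 gap(x,g). *)

Lemma mx_norm_coord (R : realType) (m k : nat) (A : 'M[R]_(m, k)) i j :
  `|A i j| <= `|A|.
Proof.
by rewrite [leRHS]/Num.Def.normr /= mx_normrE; apply/bigmax_geP; right; exists (i, j).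
Qed.

Section NormEquivalence.
Variables (R : realType) (n : nat) (N : 'rV[R]_n -> R).
Hypothesis Nnorm : is_norm N.

Lemma isnorm0 : N 0 = 0.
Proof. case: Nnorm => _ _ NZ _; by rewrite -(scale0r (0 : 'rV_n)) NZ normr0 mul0r. Qed.

Lemma isnormN w : N (- w) = N w.
Proof. case: Nnorm => _ _ NZ _; by rewrite -scaleN1r NZ normrN1 mul1r. Qed.

Lemma isnorm_sum (I : Type) (s : seq I) (F : I -> 'rV[R]_n) :
  N (\sum_(i <- s) F i) <= \sum_(i <- s) N (F i).
Proof.
case: Nnorm => _ _ _ NT; elim: s => [|a s IHs]; first by rewrite !big_nil isnorm0.
by rewrite !big_cons; apply: le_trans (NT _ _) _; exact: lerD.
Qed.

Lemma isnorm_le_mx_norm : exists2 K, 0 <= K & forall w, N w <= K * `|w|.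
Proof.
case: Nnorm => Nge0 _ NZ _; exists (\sum_(i < n) N 'e_i).
  by apply: sumr_ge0 => i _; exact: Nge0.
move=> w; rewrite {1}(row_sum_delta w); apply: le_trans (isnorm_sum _ _) _.
rewrite mulr_suml; apply: ler_sum => i _; rewrite NZ [leRHS]mulrC.
by apply: ler_wpM2r; [exact: Nge0 | exact: mx_norm_coord].
Qed.

Lemma isnorm_continuous : continuous N.
Proof.
have [K K0 NK] := isnorm_le_mx_norm; case: Nnorm => _ _ _ NT.
move=> x; apply/(@cvgrPdist_lt _ _ _ _ (nbhs_filter x)) => e e0.
apply/nbhs_ballP; exists (e / (K + 1)); first by apply: divr_gt0 => //; rewrite ltr_wpDl.
move=> y; rewrite -ball_normE /= => xy.
have Nxy : `|N x - N y| <= N (x - y).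
  rewrite ler_norml; apply/andP; split.
  - by have := NT (y - x) x; rewrite subrK -(isnormN (y - x)) opprB; lra.
  - by have := NT (x - y) y; rewrite subrK; lra.
apply: le_lt_trans Nxy _; apply: le_lt_trans (NK _) _.
apply: (@le_lt_trans _ _ (K * (e / (K + 1)))); first by rewrite ler_wpM2l // ltW.
by rewrite mulrA ltr_pdivrMr ?ltr_wpDl //; nra.
Qed.

Lemma isnorm_ge_mx_norm : exists2 c, 0 < c & forall w, c * `|w| <= N w.
Proof.
case: Nnorm => Nge0 N0 NZ _.
have [n0|n_gt0] := posnP n.
  exists 1 => // w; rewrite (_ : w = 0) ?normr0 ?mulr0 //.
  by apply/rowP => i; have := ltn_ord i; rewrite [X in (_ < X)%N]n0.
pose S := (fun w : 'rV[R]_n => `|w|) @^-1` [set 1].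
have Scompact : compact S.
  apply: bounded_closed_compact.
    by exists 1; split => // M M1 w; rewrite /S /= => ->; exact: ltW.
  by apply: preimage_closed; [move=> w _; exact: norm_continuous | exact: closed_eq].
have normalize w : w != 0 -> S (`|w|^-1 *: w).
  move=> w0; rewrite /S /= normrZ normrV ?unitfE ?normr_eq0 // normr_id.
  by rewrite mulVf // normr_eq0.
have S0 : S !=set0.
  exists (`|const_mx 1 : 'rV_n|^-1 *: const_mx 1); apply: normalize.
  by apply/eqP => /rowP /(_ (Ordinal n_gt0)); rewrite !mxE => /eqP; rewrite oner_eq0.
have [c Sc cmin] := compact_EVT_min S0 Scompact (continuous_subspaceT isnorm_continuous).
move: Sc; rewrite inE /S /= => c1.
exists (N c).
  rewrite lt_def Nge0 andbT; apply/eqP => /N0 c0.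
  by move: c1; rewrite c0 normr0 => /esym/eqP; rewrite oner_eq0.
move=> w; have [->|w0] := eqVneq w 0; first by rewrite normr0 mulr0 Nge0.
have := cmin _ (mem_set (normalize w w0)).
rewrite NZ normrV ?unitfE ?normr_eq0 // normr_id.
by rewrite ler_pdivlMl ?normr_gt0 // mulrC.
Qed.

Lemma dot_le_isnorm (u : 'rV[R]_n) : exists2 K, 0 <= K & forall w, dot u w <= K * N w.
Proof.
have [c c0 cN] := isnorm_ge_mx_norm.
exists ((\sum_(i < n) `|u 0 i|) / c); first by rewrite divr_ge0 ?sumr_ge0 // ltW.
move=> w; apply: (@le_trans _ _ ((\sum_(i < n) `|u 0 i|) * `|w|)).
  rewrite /dot mulr_suml; apply: ler_sum => i _.
  apply: le_trans (ler_norm _) _; rewrite normrM.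
  by apply: ler_wpM2l => //; exact: mx_norm_coord.
by rewrite -mulrA ler_wpM2l ?sumr_ge0 // ler_pdivlMl.
Qed.

End NormEquivalence.

Section DotProduct.
Variables (R : realType) (n : nat).
Implicit Types u v w : 'rV[R]_n.

Lemma dotDr u v w : dot u (v + w) = dot u v + dot u w.
Proof. by rewrite /dot -big_split; apply: eq_bigr => i _; rewrite mxE mulrDr. Qed.

Lemma dotZr a u v : dot u (a *: v) = a * dot u v.
Proof. by rewrite /dot mulr_sumr; apply: eq_bigr => i _; rewrite mxE; ring. Qed.

Lemma dotZl a u v : dot (a *: u) v = a * dot u v.
Proof. by rewrite /dot mulr_sumr; apply: eq_bigr => i _; rewrite mxE; ring. Qed.

Lemma dotNr u v : dot u (- v) = - dot u v.
Proof. by rewrite -scaleN1r dotZr mulN1r. Qed.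

Lemma dotNl u v : dot (- u) v = - dot u v.
Proof. by rewrite -scaleN1r dotZl mulN1r. Qed.

Lemma dotBr u v w : dot u (v - w) = dot u v - dot u w.
Proof. by rewrite dotDr dotNr. Qed.

Lemma dotBl u v w : dot (u - v) w = dot u w - dot v w.
Proof.
by rewrite /dot -sumrB; apply: eq_bigr => i _; rewrite !mxE mulrBl.
Qed.

Lemma dot0r u : dot u 0 = 0.
Proof. by rewrite /dot big1 // => i _; rewrite mxE mulr0. Qed.

Lemma dotC u v : dot u v = dot v u.
Proof. by rewrite /dot; apply: eq_bigr => i _; rewrite mulrC. Qed.

Lemma dotvv_ge0 u : 0 <= dot u u.
Proof. by apply: sumr_ge0 => i _; rewrite -expr2 sqr_ge0. Qed.

Lemma dotvv_eq0 u : dot u u = 0 -> u = 0.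
Proof.
move=> /eqP; rewrite /dot psumr_eq0 => [/allP uu0|i _]; last by rewrite -expr2 sqr_ge0.
apply/rowP => i; rewrite mxE; apply/eqP.
by have := uu0 i (mem_index_enum i); rewrite /= -expr2 sqrf_eq0.
Qed.

End DotProduct.

Section Differentiability.
Variables (R : realType) (n : nat).
Notation V := 'rV[R]_n.

Lemma ninf_ge0 (h : V) : 0 <= ninf h.
Proof.
by apply: (big_ind (fun x => 0 <= x)) => // x y x0 y0; rewrite le_max x0.
Qed.

Lemma ninfZ t (h : V) : ninf (t *: h) = `|t| * ninf h.
Proof.
rewrite /ninf (big_morph _ (fun a b => maxr_pMr a b (normr_ge0 t)) (mulr0 _)).
by apply: eq_bigr => i _; rewrite mxE normrM.
Qed.

Lemma le_add_eps_scaled (a b k : R) :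
  0 <= k -> (forall e, 0 < e -> a <= b + e * k) -> a <= b.
Proof.
move=> k0 ab; apply/ler_addgt0Pr => e e0.
have k1 : 0 < k + 1 by lra.
apply: le_trans (ab (e / (k + 1)) (divr_gt0 e0 k1)) _.
by rewrite lerD2l mulrAC ler_pdivrMr //; nra.
Qed.

Lemma has_gradient_step (F : V -> \bar R) g x h eps :
  has_gradient F g x -> 0 < eps ->
  exists t, [/\ 0 < t < 1, F (x + t *: h) \is a fin_num &
    `|fine (F (x + t *: h)) - fine (F x) - t * dot g h| <= eps * t * ninf h].
Proof.
move=> [_ Fdiff] eps0; have [d d0 near_x] := Fdiff _ eps0.
have h1 : 0 < ninf h + 1 by have := ninf_ge0 h; lra.
pose t := Num.min (d / (ninf h + 1)) (1 / 2).
have t0 : 0 < t by rewrite lt_min; apply/andP; split; [exact: divr_gt0 | lra].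
have t1 : t < 1 by rewrite gt_min; apply/orP; right; lra.
have td : ninf (t *: h) < d.
  have : t <= d / (ninf h + 1) by rewrite ge_min lexx.
  rewrite ninfZ (gtr0_norm t0) ler_pdivlMr // => tle.
  by have := ninf_ge0 h; nra.
have [Ffin Fest] := near_x _ td.
exists t; split => //; first by rewrite t0.
by move: Fest; rewrite dotZr ninfZ (gtr0_norm t0) mulrA.
Qed.

Lemma convex_gradient_ineq (F : V -> \bar R) g x z :
  convex_fun F -> has_gradient F g x -> F z \is a fin_num ->
  fine (F x) + dot g (z - x) <= fine (F z).
Proof.
move=> Fcvx Fgrad Fz; have Fx := Fgrad.1.
apply: (le_add_eps_scaled (ninf_ge0 (z - x))) => e e0.
have [t [/andP[t0 t1] Fxt est]] := has_gradient_step (z - x) Fgrad e0.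
have := Fcvx x z t; rewrite t0 t1 => /(_ isT).
rewrite -(fineK Fx) -(fineK Fz) -(fineK Fxt) -!EFinM -EFinD lee_fin => cvx.
move: est; rewrite ler_norml => /andP[est _].
have : t * (fine (F x) + dot g (z - x)) <= t * (fine (F z) + e * ninf (z - x)).
  by have := ninf_ge0 (z - x); nra.
by rewrite ler_pM2l.
Qed.

Lemma unif_smooth_bregman_le (N : V -> R) (D : set V) (f : V -> \bar R) L g x y :
  0 <= L -> unif_smooth N 2 D f L -> D x -> D y ->
  has_gradient f g x -> f y \is a fin_num ->
  fine (f y) - fine (f x) - dot g (y - x) <= L / 2 * N (y - x) ^+ 2.
Proof.
move=> L0 fsmooth Dx Dy fgrad fy; have fx := fgrad.1.
have LQ0 : 0 <= L / 2 * N (y - x) ^+ 2 by rewrite mulr_ge0 ?divr_ge0 ?sqr_ge0.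
apply: (le_add_eps_scaled (ninf_ge0 (y - x))) => e e0.
have [t [/andP[t0 t1] fxt est]] := has_gradient_step (y - x) fgrad e0.
have := fsmooth x y t Dx Dy; rewrite (ltW t0) (ltW t1) => /(_ isT).
rewrite -(fineK fx) -(fineK fy) -(fineK fxt) -!EFinM -EFinD lee_fin /= => smooth.
move: est; rewrite ler_norml => /andP[_ est].
have : t * (fine (f y) - fine (f x) - dot g (y - x))
    <= t * (L / 2 * N (y - x) ^+ 2 + e * ninf (y - x)).
  by have := ninf_ge0 (y - x); have : 0 <= t * t * (L / 2 * N (y - x) ^+ 2); nra.
by rewrite ler_pM2l.
Qed.

End Differentiability.

Section ExtendedValued.
Variables (R : realType) (n : nat).
Notation V := 'rV[R]_n.

Lemma dom_fin_num (F : V -> \bar R) z : F z \is a fin_num -> dom F z.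
Proof. by rewrite /dom /= ltey fin_numE => /andP[]. Qed.

Lemma fin_num_dom (F : V -> \bar R) z :
  (forall z, F z != -oo%E) -> dom F z -> F z \is a fin_num.
Proof. by move=> Fnoo; rewrite /dom /= ltey fin_numE Fnoo. Qed.

Lemma fin_num_le_EFin (x : \bar R) (r : R) :
  x != -oo%E -> (x <= r%:E)%E -> x \is a fin_num.
Proof. by rewrite fin_numE => -> /=; apply: contraTneq => ->; rewrite leye_eq. Qed.

Lemma convex_fun_segment (F : V -> \bar R) x y t :
  (forall z, F z != -oo%E) -> convex_fun F ->
  F x \is a fin_num -> F y \is a fin_num -> 0 <= t <= 1 ->
  F (x + t *: (y - x)) \is a fin_num /\
  fine (F (x + t *: (y - x))) <= (1 - t) * fine (F x) + t * fine (F y).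
Proof.
move=> Fnoo Fcvx Fx Fy /andP[]; rewrite le_eqVlt => /orP[/eqP<- _|t0].
  by rewrite scale0r addr0 subr0 mul1r mul0r addr0.
rewrite le_eqVlt => /orP[/eqP->|t1].
  by rewrite scale1r addrC subrK subrr mul0r add0r mul1r.
have := Fcvx x y t; rewrite t0 t1 => /(_ isT) cvx.
rewrite -(fineK Fx) -(fineK Fy) -!EFinM -EFinD in cvx.
have Fxy := fin_num_le_EFin (Fnoo _) cvx.
by split => //; rewrite -lee_fin fineK.
Qed.

Lemma dom_indicator (C : set V) z : dom (indicator C) z <-> C z.
Proof.
rewrite /dom /indicator /=; split; last by move=> Cz; rewrite mem_set.
by case: ifPn => [/set_mem //|_]; rewrite ltxx.
Qed.

Lemma indicator_mem (C : set V) z : C z -> indicator C z = 0%E.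
Proof. by move=> Cz; rewrite /indicator mem_set. Qed.

End ExtendedValued.

Section LinearisedProblem.
Variables (R : realType) (n : nat).
Notation V := 'rV[R]_n.

Definition lin_minimizer (Psi : V -> \bar R) (g s : V) : Prop :=
  Psi s \is a fin_num /\ forall z, ((dot g s)%:E + Psi s <= (dot g z)%:E + Psi z)%E.

Definition quad_growth (N : V -> R) (Psi : V -> \bar R) (g s : V) (c : R) : Prop :=
  forall z, dom Psi z ->
    c / 2 * N (s - z) ^+ 2 <= dot g z + fine (Psi z) - (dot g s + fine (Psi s)).

Lemma exists_lin_minimizer (f Psi : V -> \bar R) g x :
  (forall z, Psi z != -oo%E) ->
  (forall x g, dom f x -> has_gradient f g x ->
     exists s, forall s', ((dot g s)%:E + Psi s <= (dot g s')%:E + Psi s')%E) ->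
  has_gradient f g x -> dom Psi x -> exists s, lin_minimizer Psi g s.
Proof.
move=> Psinoo fmin xgrad Dx; have [s smin] := fmin x g (dom_fin_num xgrad.1) xgrad.
exists s; split => //; rewrite fin_numE Psinoo /=; apply/eqP => Psis.
have := smin x; rewrite Psis -(fineK (fin_num_dom Psinoo Dx)).
by rewrite -EFinD addeC /= leye_eq.
Qed.

Lemma conjf_lin_minimizer (Psi : V -> \bar R) g s :
  (forall z, Psi z != -oo%E) -> lin_minimizer Psi g s ->
  conjf Psi (- g) = (- (dot g s + fine (Psi s)))%:E.
Proof.
move=> Psinoo [Psis smin].
have [ps Psis_ps] : exists ps, Psi s = ps%:E by exists (fine (Psi s)); rewrite fineK.
rewrite Psis_ps /= in smin *.
apply/eqP; rewrite eq_le; apply/andP; split.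
  apply: ge_ereal_sup => _ [z _ <-]; have := smin z.
  case: (Psi z) (Psinoo z) => [r _| _|//] zmin.
    by move: zmin; rewrite -!EFinD -?EFinB !lee_fin dotNl; lra.
  by rewrite /= addeC /= leNye.
apply: ereal_sup_ubound; exists s => //.
by rewrite Psis_ps -?EFinB dotNl opprD.
Qed.

Lemma conjf_gradient (f : V -> \bar R) g x :
  convex_fun f -> proper_fun f -> has_gradient f g x ->
  conjf f g = (dot g x - fine (f x))%:E.
Proof.
move=> fcvx fproper fgrad; apply/eqP; rewrite eq_le; apply/andP; split.
  apply: ge_ereal_sup => _ [z _ <-].
  case Ez: (f z) => [r| |]; last by have := fproper.1 z; rewrite Ez.
    have := convex_gradient_ineq (z := z) fcvx fgrad; rewrite Ez /= => /(_ isT).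
    by rewrite dotBr -?EFinB lee_fin; lra.
  by rewrite /= addeC /= leNye.
apply: ereal_sup_ubound; exists x => //.
by rewrite -[in LHS](fineK fgrad.1) -EFinB.
Qed.

Lemma conjf_shift_le (N : V -> R) (Psi : V -> \bar R) g s c d K t :
  (forall z, Psi z != -oo%E) -> is_norm N -> 0 < c -> quad_growth N Psi g s c ->
  (forall w, dot d w <= K * N w) -> 0 <= t ->
  (conjf Psi (t *: d - g)
    <= (- (dot g s + fine (Psi s)) + t * dot d s + t ^+ 2 * (K ^+ 2 / (2 * c)))%:E)%E.
Proof.
move=> Psinoo Nnorm c0 sgrowth dK t0; apply: ge_ereal_sup => _ [z _ <-].
case Ez: (Psi z) => [r| |]; last by have := Psinoo z; rewrite Ez.
  have := sgrowth z; rewrite /dom /= Ez ltry /= => /(_ isT) zgrowth.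
  have := dK (z - s); rewrite dotBr -[z - s]opprB isnormN // => dKz.
  rewrite -EFinB lee_fin dotBl dotZl.
  set Q := N (s - z) in zgrowth dKz.
  have amgm : t * K * Q - c / 2 * Q ^+ 2 <= t ^+ 2 * (K ^+ 2 / (2 * c)).
    by rewrite [leRHS]mulrA ler_pdivlMr ?mulr_gt0 //; have := sqr_ge0 (c * Q - t * K); nra.
  have : t * (dot d z - dot d s) <= t * (K * Q) by rewrite ler_wpM2l.
  lra.
by rewrite /= addeC /= leNye.
Qed.

Lemma subdiff_conjf_lin_minimizer (N : V -> R) (Psi : V -> \bar R) g s0 c s :
  is_norm N -> (forall z, Psi z != -oo%E) -> 0 < c ->
  lin_minimizer Psi g s0 -> quad_growth N Psi g s0 c ->
  subdiff (conjf Psi) (- g) s -> s = s0.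
Proof.
move=> Nnorm Psinoo c0 s0min s0growth [_ ssub].
set d := s - s0; have [K _ dK] := dot_le_isnorm Nnorm d.
apply/eqP; rewrite -subr_eq0 -/d; apply/eqP/dotvv_eq0/eqP.
rewrite eq_le dotvv_ge0 andbT.
have k0 : 0 <= K ^+ 2 / (2 * c) by rewrite divr_ge0 ?sqr_ge0 ?mulr_ge0 ?ltW.
(* The subgradient inequality at t d - g against conjf_shift_le: t <d,d> <= O(t^2). *)
apply: (le_add_eps_scaled k0) => t t0.
have := ssub (t *: d - g); rewrite opprK subrK (conjf_lin_minimizer Psinoo s0min).
move=> /le_trans /(_ (conjf_shift_le Psinoo Nnorm c0 s0growth dK (ltW t0))).
rewrite -EFinD lee_fin dotZr (dotC s d).
have -> : dot d s = dot d s0 + dot d d by rewrite -dotDr [s0 + d]addrC /d subrK.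
move=> tdd; have : t * dot d d <= t * (0 + t * (K ^+ 2 / (2 * c))) by lra.
by rewrite ler_pM2l.
Qed.

Lemma le_of_forall_sqr_mul_le (A B : R) :
  (forall t, 0 < t < 1 -> t ^+ 2 * A <= B) -> A <= B.
Proof.
move=> AB; have Bhalf := AB (1 / 2) ltac:(apply/andP; split; lra).
have [A0|A_gt0] := leP A 0; first nra.
have [//|BA] := leP A B.
have B0 : 0 < B by nra.
pose t := (A + B) / (2 * A).
have t01 : 0 < t < 1.
  by apply/andP; split; [rewrite divr_gt0 //; lra | rewrite ltr_pdivrMr; lra].
have := AB t t01.
have -> : t ^+ 2 * A = (A + B) ^+ 2 / (4 * A) by rewrite /t; field; lra.
by rewrite ler_pdivrMr; [nra | lra].
Qed.

Lemma unif_convex_fun_quad_growth (N : V -> R) (Psi : V -> \bar R) g s mu :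
  (forall z, Psi z != -oo%E) -> 0 <= mu -> unif_convex_fun N 2 (dom Psi) Psi mu ->
  lin_minimizer Psi g s -> quad_growth N Psi g s mu.
Proof.
move=> Psinoo mu0 Psiuc [Psis smin] z Dz.
have Psiz := fin_num_dom Psinoo Dz.
apply: le_of_forall_sqr_mul_le => t /andP[t0 t1].
have t01 : 0 <= t <= 1 by rewrite !ltW.
have uc := Psiuc z s t Dz (dom_fin_num Psis) t01.
set q := z + t *: (s - z) in uc; have lin := smin q.
rewrite -(fineK Psiz) -(fineK Psis) -!EFinM -?EFinB -?EFinD -?EFinB in uc.
have Psiq := fin_num_le_EFin (Psinoo q) uc.
rewrite -(fineK Psiq) lee_fin in uc.
rewrite -(fineK Psiq) -(fineK Psis) -?EFinD lee_fin /q dotDr dotZr dotBr -/q in lin.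
set K := N (s - z) ^+ 2 in uc *.
have K0 : 0 <= mu / 2 * K by rewrite mulr_ge0 ?divr_ge0 ?sqr_ge0.
have : mu / 2 * t * (1 - t) * K
    <= (1 - t) * (dot g z + fine (Psi z) - (dot g s + fine (Psi s))) by lra.
rewrite (_ : mu / 2 * t * (1 - t) * K = (1 - t) * (t * (mu / 2 * K))); last by ring.
rewrite ler_pM2l ?subr_gt0 // => tK; apply: le_trans tK.
by rewrite expr2 -mulrA; apply: ler_piMl; [exact: mulr_ge0 (ltW t0) K0 | exact: ltW].
Qed.

Lemma dualnorm_ge0 (N : V -> R) g : is_norm N -> 0 <= dualnorm N g.
Proof.
move=> Nnorm; rewrite /dualnorm; set E := [set dot g w | w in _].
have E0 : E 0 by exists 0; rewrite /= ?(isnorm0 Nnorm) ?dot0r.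
have [Eub|Enub] := pselect (has_ubound E); first exact: ub_le_sup Eub _ E0.
by rewrite sup_out // => -[].
Qed.

Lemma inf_dualnorm_le (N : V -> R) (C : set V) (gf : V -> V) x :
  is_norm N -> C x -> inf [set dualnorm N (gf y) | y in C] <= dualnorm N (gf x).
Proof.
move=> Nnorm Cx; apply: ge_inf; last by exists x.
by exists 0 => _ [y _ <-]; exact: dualnorm_ge0.
Qed.

Lemma unif_convex_set_quad_growth (N : V -> R) (C : set V) g s mu ell :
  is_norm N -> 0 <= mu -> unif_convex_set N 2 C mu ->
  0 < ell -> ell <= dualnorm N g ->
  lin_minimizer (indicator C) g s -> quad_growth N (indicator C) g s (ell * mu).
Proof.
move=> Nnorm mu0 Cuc ell0 ell_le [Cs_fin smin] z /dom_indicator Cz.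
have Cs : C s by apply/dom_indicator; exact: dom_fin_num.
rewrite (indicator_mem Cz) (indicator_mem Cs) /= !addr0.
apply: le_of_forall_sqr_mul_le => t /andP[t0 t1].
have E0 : [set dot g w | w in [set w | N w <= 1]] !=set0.
  by exists 0, 0; rewrite /= ?(isnorm0 Nnorm) ?dot0r.
have tell : t * ell < dualnorm N g by apply: lt_le_trans ell_le; rewrite gtr_pMl.
have [_ [w /= Nw <-] gw] := sup_gt E0 tell.
have t01 : 0 <= t <= 1 by rewrite !ltW.
have := Cuc z s t (- w) Cz Cs t01; rewrite isnormN // => /(_ Nw).
set p := _ + _ + _ => Cp; have := smin p.
rewrite (indicator_mem Cp) (indicator_mem Cs) !adde0 lee_fin.
rewrite /p !dotDr !dotZr dotBr dotNr; set K := N (s - z) ^+ 2 => lin.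
have kappa0 : 0 <= mu / 2 * t * (1 - t) * K.
  apply: mulr_ge0; last exact: sqr_ge0.
  by apply: mulr_ge0; [apply: mulr_ge0; [exact: divr_ge0 | exact: ltW] | lra].
have kappa : mu / 2 * t * (1 - t) * K * (t * ell) <= mu / 2 * t * (1 - t) * K * dot g w.
  by rewrite ler_wpM2l // ltW.
have : mu / 2 * t * (1 - t) * K * (t * ell) <= (1 - t) * (dot g z - dot g s) by lra.
rewrite (_ : _ * (t * ell) = (1 - t) * (t ^+ 2 * (ell * mu / 2 * K))); last by ring.
by rewrite ler_pM2l ?subr_gt0.
Qed.

End LinearisedProblem.

Section GrowthFromQuadraticGrowth.
Variables (R : realType) (n : nat) (N : 'rV[R]_n -> R) (f Psi : 'rV[R]_n -> \bar R).
Variables (gf : 'rV[R]_n -> 'rV[R]_n) (L c : R).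
Hypotheses (Nnorm : is_norm N) (fconvex : convex_fun f) (fproper : proper_fun f).
Hypotheses (Psiproper : proper_fun Psi) (Psiconvex : convex_fun Psi).
Hypothesis fgrad : forall x, dom Psi x -> has_gradient f (gf x) x.
Hypothesis fmin : forall x g, dom f x -> has_gradient f g x ->
  exists s, forall s', ((dot g s)%:E + Psi s <= (dot g s')%:E + Psi s')%E.
Hypotheses (L0 : 0 <= L) (fsmooth : unif_smooth N 2 (dom Psi) f L).
Hypothesis c0 : 0 < c.
Hypothesis Psigrowth : forall x s, dom Psi x -> lin_minimizer Psi (gf x) s ->
  quad_growth N Psi (gf x) s c.

Lemma gap_lin_minimizer x s : dom Psi x -> lin_minimizer Psi (gf x) s ->
  gap f Psi x (gf x) = (dot (gf x) x + fine (Psi x) - (dot (gf x) s + fine (Psi s)))%:E.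
Proof.
move=> Dx smin; rewrite /gap (conjf_gradient fconvex fproper (fgrad Dx)).
rewrite (conjf_lin_minimizer Psiproper.1 smin).
case: (f x) (fgrad Dx).1 => [a _|//|//].
case: (Psi x) (fin_num_dom Psiproper.1 Dx) => [b _|//|//].
by rewrite /= -!EFinD; congr EFin; ring.
Qed.

Lemma Dcal_le_smooth x s t : dom Psi x -> Psi s \is a fin_num -> 0 <= t <= 1 ->
  (Dcal f Psi gf x s t <= (L / 2 * t ^+ 2 * N (s - x) ^+ 2)%:E)%E.
Proof.
move=> Dx Psis t01; have Psix := fin_num_dom Psiproper.1 Dx.
have [Psiy Psiseg] := convex_fun_segment Psiproper.1 Psiconvex Psix Psis t01.
have Dy := dom_fin_num Psiy; have fy := (fgrad Dy).1.
have := unif_smooth_bregman_le L0 fsmooth Dx Dy (fgrad Dx) fy.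
rewrite /Dcal /bregman; set y := x + t *: (s - x) in Psiy Psiseg Dy fy *.
have -> : y - x = t *: (s - x) by rewrite /y addrC addKr.
case: Nnorm => _ _ NZ _; rewrite NZ ger0_norm ?(andP t01).1 // exprMn => breg.
rewrite -(fineK (fgrad Dx).1) -(fineK fy) -(fineK Psix) -(fineK Psiy) -(fineK Psis).
rewrite -!EFinM -?EFinB -?EFinD -?EFinB -?EFinD -?EFinB -?EFinD lee_fin.
lra.
Qed.

Lemma growth21_of_quad_growth : growth21 f Psi gf (2 * L / c).
Proof.
move=> x Dx s ssub t t01.
have [s0 s0min] := exists_lin_minimizer Psiproper.1 fmin (fgrad Dx) Dx.
have s0growth := Psigrowth Dx s0min.
rewrite (subdiff_conjf_lin_minimizer Nnorm Psiproper.1 c0 s0min s0growth ssub).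
rewrite (gap_lin_minimizer Dx s0min) -EFinM.
apply: le_trans (Dcal_le_smooth Dx s0min.1 t01) _; rewrite lee_fin.
have -> : L / 2 * t ^+ 2 * N (s0 - x) ^+ 2 = L * t ^+ 2 / c * (c / 2 * N (s0 - x) ^+ 2).
  by field; rewrite gt_eqF.
have -> : 2 * L / c * t ^+ 2 / 2 = L * t ^+ 2 / c by field; rewrite gt_eqF.
apply: ler_wpM2l; last exact: s0growth.
exact: divr_ge0 (mulr_ge0 L0 (sqr_ge0 t)) (ltW c0).
Qed.

End GrowthFromQuadraticGrowth.

Theorem proposition3 (R : realType) (n : nat) (N : 'rV[R]_n -> R)
  (f Psi : 'rV[R]_n -> \bar R) (gf : 'rV[R]_n -> 'rV[R]_n) (L : R) :
  (* standing assumptions: f, Psi closed proper convex *)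
  closed_fun f -> proper_fun f -> convex_fun f ->
  closed_fun Psi -> proper_fun Psi -> convex_fun Psi ->
  (* (A1): f differentiable on dom Psi, with gradient gf *)
  (forall x, dom Psi x -> has_gradient f (gf x) x) ->
  (* (A2): argmin_s <grad f(x), s> + Psi(s) nonempty for x in dom f *)
  (forall x g, dom f x -> has_gradient f g x ->
     exists s, forall s', ((dot g s)%:E + Psi s <= (dot g s')%:E + Psi s')%E) ->
  is_norm N -> 0 < L -> unif_smooth N 2 (dom Psi) f L ->
  (* (a) *)
  (forall mu : R, 0 < mu -> unif_convex_fun N 2 (dom Psi) Psi mu ->
     growth21 f Psi gf (2 * L / mu)) /\
  (* (b) *)
  (forall (C : set 'rV[R]_n) (mu : R),
     closed_set C -> convex_set C -> Psi = indicator C ->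
     0 < mu -> unif_convex_set N 2 C mu ->
     let ell := inf [set dualnorm N (gf x) | x in C] in
     0 < ell ->
     growth21 f Psi gf (2 * L / (ell * mu))).
Proof.
move=> _ fproper fconvex _ Psiproper Psiconvex fgrad fmin Nnorm /ltW L0 fsmooth.
split=> [mu mu0 Psiuc | C mu _ _ PsiC mu0 Cuc ell ell0].
  apply: (growth21_of_quad_growth (N := N)) => // x s _.
  exact: unif_convex_fun_quad_growth Psiproper.1 (ltW mu0) Psiuc.
subst Psi; apply: (growth21_of_quad_growth (N := N)); rewrite ?mulr_gt0 // => x s /dom_indicator Cx.
exact: unif_convex_set_quad_growth Nnorm (ltW mu0) Cuc ell0 (inf_dualnorm_le gf Nnorm Cx).
Qed.
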